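(* Let $X$ be a Banach space, $H$ a Hilbert space, $T\in\mathcal L(X,H)$, $f\in H$, $J$ a seminorm on $X$ such that all Tikhonov functionals below have minimizers, and $(\lambda_k)\subset(0,\infty)$. Let $x_k$ be the MHDM iterates and $x_{\lambda_k}$ any minimizer of $x\mapsto\frac{\lambda_k}{2}\|Tx-f\|^2+J(x)$. Then for every $k\in\mathbb N_0$, $$|T^*T(x_{\lambda_k}-x_k)|_*\le\frac{2}{\lambda_k}.$$
   Context: Seminorm: $J:X\to[0,\infty]$ with $J(\alpha x)=|\alpha|J(x)$, $J(x+y)\le J(x)+J(y)$. Dual seminorm: for $x^*\in X^*$, $|x^*|_*=\sup_{J(x)\ne0}\langle x^*,x/J(x)\rangle$, with the convention $x/J(x)=0$ if $J(x)=\infty$. MHDM: $x_0\in\arg\min_x\frac{\lambda_0}{2}\|Tx-f\|^2+J(x)$, and for $k\ge1$, $x_k\in\arg\min_x\frac{\lambda_k}{2}\|Tx-f\|^2+J(x-x_{k-1})$ (equivalently $x_k=x_{k-1}+u_k$ with $u_k\in\arg\min_u\frac{\lambda_k}{2}\|f-Tx_{k-1}-Tu\|^2+J(u)$). *)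

From HB Require Import structures.
From mathcomp Require Import all_boot all_order all_algebra.
From mathcomp Require Import all_classical all_reals all_analysis.
Set Implicit Arguments. Unset Strict Implicit. Unset Printing Implicit Defensive.
Import Order.TTheory GRing.Theory Num.Theory.
Import numFieldNormedType.Exports.
Local Open Scope classical_set_scope.
Local Open Scope ring_scope.

(* A (real) inner product [ip] on a normed space H inducing its norm:
   together with completeness of H this makes H a Hilbert space. *)
Definition is_inner_product (R : realType) (H : normedModType R)
  (ip : H -> H -> R) : Prop :=
  [/\ (forall u v, ip u v = ip v u),
      (forall a u v w, ip (a *: u + v) w = a * ip u w + ip v w)
    & (forall u, `|u| ^+ 2 = ip u u)].

Definition is_seminorm (R : realType) (X : normedModType R)
  (J : X -> \bar R) : Prop :=
  [/\ (forall x, (0 <= J x)%E),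
      (forall (a : R) x, J (a *: x) = (`|a|%:E * J x)%E)
    & (forall x y, (J (x + y)%R <= J x + J y)%E)].

(* Dual seminorm of a functional phi (an element of X^* ):
   |phi|_* = sup_{J x <> 0} phi (x / J x), with x / J x := 0 if J x = +oo. *)
Definition dual_seminorm (R : realType) (X : normedModType R)
  (J : X -> \bar R) (phi : X -> R) : \bar R :=
  ereal_sup [set (if J x == +oo%E then phi 0 else phi ((fine (J x))^-1 *: x))%:E
            | x in [set x | J x != 0%E]].

Definition tikh (R : realType) (X H : normedModType R) (T : X -> H) (f : H)
  (J : X -> \bar R) (lam : R) (z x : X) : \bar R :=
  ((lam / 2 * `|T x - f| ^+ 2)%:E + J (x - z)%R)%E.

Definition is_minimizer (R : realType) (X : Type) (F : X -> \bar R) (x : X) : Prop :=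
  forall y, (F x <= F y)%E.

Definition is_MHDM (R : realType) (X H : normedModType R) (T : X -> H) (f : H)
  (J : X -> \bar R) (lam : nat -> R) (x : nat -> X) : Prop :=
  is_minimizer (tikh T f J (lam 0%N) 0) (x 0%N) /\
  forall k, is_minimizer (tikh T f J (lam k.+1) (x k)) (x k.+1).

From HB Require Import structures.
From mathcomp Require Import all_boot all_order all_algebra.
From mathcomp Require Import all_classical all_reals all_analysis.
From mathcomp Require Import ring lra.
Set Implicit Arguments. Unset Strict Implicit. Unset Printing Implicit Defensive.
Import Order.TTheory GRing.Theory Num.Theory.
Import numFieldNormedType.Exports.
Local Open Scope classical_set_scope.
Local Open Scope ring_scope.

(* Write F_z(x) = lam/2 ||T x - f||^2 + J (x - z).  If xm
   minimizes F_z, then comparing F_z(xm) with F_z(xm + t y), t > 0, and using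
   subadditivity and homogeneity of J gives
       0 <= lam <T xm - f, T y> + J y + t lam/2 ||T y||^2   for all t > 0,
   hence, letting t -> 0, the first-order condition
       lam <f - T xm, T y> <= J y                                        (FO).
   The k-th MHDM iterate x_k minimizes F_z for z = x_{k-1} (or z = 0), and
   x_{lam_k} minimizes F_0.  For J y = 1, applying (FO) to x_k with y and to
   x_{lam_k} with -y and adding yields lam_k <T (x_{lam_k} - x_k), T y> <= 2.
   Finally the dual seminorm of a functional is bounded by its supremum on
   the unit sphere {J y = 1}, since every admissible x / J x lies on it. *)

Section InnerProduct.
Variables (R : realType) (H : normedModType R) (ip : H -> H -> R).
Hypothesis ipH : is_inner_product ip.

Lemma ipC u v : ip u v = ip v u.
Proof. by case: ipH. Qed.

Lemma ip_norm u : `|u| ^+ 2 = ip u u.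
Proof. by case: ipH. Qed.

Lemma ipDl u v w : ip (u + v) w = ip u w + ip v w.
Proof. by case: ipH => _ ipL _; rewrite -[u in LHS]scale1r ipL mul1r. Qed.

Lemma ipZl a u w : ip (a *: u) w = a * ip u w.
Proof.
case: ipH => _ ipL _.
have ip0 : ip 0 w = 0 by have := ipL 1 0 0 w; rewrite scaler0 addr0 mul1r; lra.
by rewrite -[a *: u]addr0 ipL ip0 addr0.
Qed.

Lemma ipNl u w : ip (- u) w = - ip u w.
Proof. by rewrite -scaleN1r ipZl mulN1r. Qed.

Lemma ipBl u v w : ip (u - v) w = ip u w - ip v w.
Proof. by rewrite ipDl ipNl. Qed.

Lemma ipNr u w : ip u (- w) = - ip u w.
Proof. by rewrite ipC ipNl ipC. Qed.

Lemma ipZr a u w : ip u (a *: w) = a * ip u w.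
Proof. by rewrite ipC ipZl ipC. Qed.

Lemma ip0r u : ip u 0 = 0.
Proof. by rewrite -(scale0r 0) ipZr mul0r. Qed.

(* Expansion of ||u + t w||^2, the only place where the geometry of the
   Hilbert space enters. *)
Lemma norm_add_scale_sq u w (t : R) :
  `|u + t *: w| ^+ 2 = `|u| ^+ 2 + 2 * t * ip u w + t ^+ 2 * `|w| ^+ 2.
Proof.
rewrite !ip_norm ipDl (ipC u) (ipC (t *: w)) !ipDl !ipZl !ipZr (ipC w u).
ring.
Qed.

End InnerProduct.

Section Seminorm.
Variables (R : realType) (X : normedModType R) (J : X -> \bar R).
Hypothesis HJ : is_seminorm J.

Lemma seminorm0 : J 0 = 0%E.
Proof. by case: HJ => _ JZ _; rewrite -(scale0r 0) JZ normr0 mul0e. Qed.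

Lemma seminormN y : J (- y) = J y.
Proof. by case: HJ => _ JZ _; rewrite -scaleN1r JZ normrN normr1 mul1e. Qed.

Lemma seminorm_normalize v :
  J v != 0%E -> J v != +oo%E -> J ((fine (J v))^-1 *: v) = 1%:E.
Proof.
case: HJ => Jge0 JZ _ /= Jv0 Jvoo.
have [r Jvr] : exists r, J v = r%:E.
  by move: Jvoo (Jge0 v); case: (J v) => [r| |] // _ _; exists r.
have r0 : 0 < r by move: Jv0 (Jge0 v); rewrite Jvr lee_fin eqe lt_def => -> ->.
by rewrite JZ Jvr /= -EFinM gtr0_norm ?invr_gt0 // mulVf // gt_eqF.
Qed.

Lemma dual_seminorm_le (phi : X -> R) (c : R) :
  phi 0 <= c -> (forall y, J y = 1%:E -> phi y <= c) ->
  (dual_seminorm J phi <= c%:E)%E.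
Proof.
move=> phi0 phi_sphere; apply: ge_ereal_sup => _ [v /= Jv0 <-].
case: ifPn => Jvoo; rewrite lee_fin //.
exact/phi_sphere/seminorm_normalize.
Qed.

End Seminorm.

Lemma ge0_of_forall_pos_affine (R : realType) (a b : R) :
  (forall t, 0 < t -> 0 <= a + t * b) -> 0 <= a.
Proof.
move=> hab; rewrite leNgt; apply/negP => a0.
pose t := - a / (2 * (`|b| + 1)).
have b1 : 0 < `|b| + 1 by rewrite ltr_wpDl.
have t0 : 0 < t by rewrite divr_gt0 ?oppr_gt0 // mulr_gt0.
have tdef : t * (2 * (`|b| + 1)) = - a by rewrite mulfVK // gt_eqF ?mulr_gt0.
have tb : t * b <= t * `|b| := ler_wpM2l (ltW t0) (ler_norm b).
have := hab t t0; nra.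
Qed.

Lemma tikh_first_order (R : realType) (X H : normedModType R)
  (ip : H -> H -> R) (ipH : is_inner_product ip)
  (T : {linear X -> H}) (f : H) (J : X -> \bar R) (HJ : is_seminorm J)
  (lam : R) (lam_pos : 0 < lam) (z xm : X)
  (xm_min : is_minimizer (tikh T f J lam z) xm) (y : X) (c : R) :
  J y = c%:E -> lam * ip (f - T xm) (T y) <= c.
Proof.
move=> Jy; have [Jge0 JZ JD] := HJ.
have [j Jxm] : exists j, J (xm - z) = j%:E.
  have := xm_min z; rewrite /tikh subrr seminorm0 // adde0.
  by move: (Jge0 (xm - z)); case: (J (xm - z)) => [j| |] // _ _; exists j.
set u := T xm - f; set w := T y.
have perturb t : 0 < t -> 0 <= lam * ip u w + c + t * (lam / 2 * `|w| ^+ 2).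
  move=> t0.
  have Jt : (J (xm + t *: y - z)%R <= (j + t * c)%:E)%E.
    rewrite addrAC; apply: le_trans (JD _ _) _.
    by rewrite JZ Jy Jxm gtr0_norm // -EFinM -EFinD.
  have Tt : T (xm + t *: y) - f = u + t *: w by rewrite linearD linearZ addrAC.
  have := le_trans (xm_min (xm + t *: y)) (leeD2l _ Jt).
  rewrite /tikh Jxm -!EFinD lee_fin Tt (norm_add_scale_sq ipH) => le_t.
  have : 0 <= t * (lam * ip u w + c + t * (lam / 2 * `|w| ^+ 2)) by nra.
  by rewrite pmulr_rge0.
have := ge0_of_forall_pos_affine perturb.
by rewrite -opprB (ipNl ipH); lra.
Qed.

Lemma MHDM_minimizer (R : realType) (X H : normedModType R) (T : X -> H)
  (f : H) (J : X -> \bar R) (lam : nat -> R) (x : nat -> X) :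
  is_MHDM T f J lam x ->
  forall k, exists z, is_minimizer (tikh T f J (lam k) z) (x k).
Proof. by case=> x0_min xS_min [|k]; [exists 0 | exists (x k)]. Qed.

Theorem mainTheorem9 (R : realType) (X H : completeNormedModType R)
  (ip : H -> H -> R) (ipH : is_inner_product ip)
  (T : {linear X -> H}) (Tcont : continuous T) (f : H)
  (J : X -> \bar R) (HJ : is_seminorm J)
  (lam : nat -> R) (lam_pos : forall k, 0 < lam k)
  (x : nat -> X) (Hx : is_MHDM T f J lam x)
  (xlam : nat -> X) (Hxlam : forall k, is_minimizer (tikh T f J (lam k) 0) (xlam k)) :
  forall k : nat,
    (dual_seminorm J (fun y => ip (T (xlam k - x k)%R) (T y)) <= (2 / lam k)%:E)%E.
Proof.
move=> k; have lk := lam_pos k.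
have [z xk_min] := MHDM_minimizer Hx k.
apply: dual_seminorm_le => // [|y Jy].
  by rewrite linear0 (ip0r ipH) divr_ge0 ?ltW.
have FO_xk := tikh_first_order ipH HJ lk xk_min Jy.
have FO_xlam := tikh_first_order ipH HJ lk (Hxlam k) (etrans (seminormN HJ y) Jy).
rewrite linearN (ipNr ipH) !(ipBl ipH) in FO_xlam.
rewrite !(ipBl ipH) in FO_xk.
rewrite linearB (ipBl ipH) ler_pdivlMr // mulrC; lra.
Qed.
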